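(* Let $d,n\ge 1$, let $\kappa\ge 1$ divide $d$, set $d'=d/\kappa$, let $r\ge 2$ and $\mathbf r=(r,\dots,r)\in\mathbb{N}^d$. Let $A_1,\dots,A_{d'}\in\mathbb{R}^{m\times n^\kappa}$ and let $\mathcal{A}(\mathcal{Y})=\mathcal{Y}\times_1A_1\times_2\cdots\times_{d'}A_{d'}$ for $\mathcal{Y}\in\mathbb{R}^{n^\kappa\times\cdots\times n^\kappa}$ ($d'$ modes). Suppose that each $A_i$ has the RIP$(\varepsilon,\mathcal{S}_{1,2})$ property, and let $\delta=4d'r^d\varepsilon$ with $\delta<1$. Then $\mathcal{A}\circ\mathcal{R}$ has the TRIP$(\delta,\mathbf r)$ property, i.e. $$(1-\delta)\|\mathcal{X}\|^2\le\|\mathcal{A}(\mathcal{R}(\mathcal{X}))\|^2\le(1+\delta)\|\mathcal{X}\|^2$$ for all $\mathcal{X}\in\mathbb{R}^{n\times\cdots\times n}$ ($d$ modes) with HOSVD rank at most $\mathbf r$.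
   Context: $\|\cdot\|$ denotes the Frobenius norm of a tensor. The $j$-mode product of $\mathcal{X}\in\mathbb{R}^{p_1\times\cdots\times p_D}$ with $U\in\mathbb{R}^{q\times p_j}$ is the tensor $\mathcal{X}\times_jU\in\mathbb{R}^{p_1\times\cdots\times q\times\cdots\times p_D}$ with entries $(\mathcal{X}\times_jU)_{i_1,\dots,\ell,\dots,i_D}=\sum_{i_j=1}^{p_j}\mathcal{X}_{i_1,\dots,i_j,\dots,i_D}U_{\ell,i_j}$. A $d$-mode tensor $\mathcal{X}\in\mathbb{R}^{n\times\cdots\times n}$ has HOSVD (multilinear) rank at most $(r,\dots,r)$ if there are subspaces $\mathcal{U}_1,\dots,\mathcal{U}_d\subset\mathbb{R}^n$ of dimension $r$ with $\mathcal{X}\in\mathcal{U}_1\otimes\cdots\otimes\mathcal{U}_d$. The reshaping operator $\mathcal{R}:\mathbb{R}^{n\times\cdots\times n}\ (d\text{ modes})\to\mathbb{R}^{n^\kappa\times\cdots\times n^\kappa}\ (d'\text{ modes})$ is the unique linear map with $\mathcal{R}(\mathbf{x}^1\circ\cdots\circ\mathbf{x}^d)=\bigcirc_{i=1}^{d'}\big(\mathbf{x}^{\kappa(i-1)+1}\otimes\cdots\otimes\mathbf{x}^{\kappa i}\big)$, where $\circ$ is the outer product and $\otimes$ the Kronecker product of vectors. Let $\mathcal{S}_1=\{\mathbf{u}^1\otimes\cdots\otimes\mathbf{u}^\kappa:\mathbf{u}^i\in\mathbb{S}^{n-1}\}\subset\mathbb{R}^{n^\kappa}$, $\mathcal{S}_2=\{(\mathbf{x}+\mathbf{y})/\|\mathbf{x}+\mathbf{y}\|_2:\mathbf{x},\mathbf{y}\in\mathcal{S}_1,\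 \langle\mathbf{x},\mathbf{y}\rangle=0\}$ and $\mathcal{S}_{1,2}=\mathcal{S}_1\cup\mathcal{S}_2$. A linear map $L$ has the RIP$(\varepsilon,\mathcal{S})$ property if $(1-\varepsilon)\|s\|^2\le\|L(s)\|^2\le(1+\varepsilon)\|s\|^2$ for all $s\in\mathcal{S}$. A linear map has the TRIP$(\delta,\mathbf r)$ property if $(1-\delta)\|\mathcal{X}\|^2\le\|\cdot(\mathcal{X})\|^2\le(1+\delta)\|\mathcal{X}\|^2$ for all $\mathcal{X}$ of HOSVD rank at most $\mathbf r$. *)

From HB Require Import structures.
From mathcomp Require Import all_boot all_order all_algebra.
From mathcomp Require Import reals.
Set Implicit Arguments. Unset Strict Implicit. Unset Printing Implicit Defensive.
Import Order.TTheory GRing.Theory Num.Theory.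
Local Open Scope ring_scope.

Definition idx (D n : nat) := {ffun 'I_D -> 'I_n}.

Definition tensor (R : realType) (D n : nat) := idx D n -> R.

Definition tnorm2 (R : realType) D n (X : tensor R D n) : R :=
  \sum_(i : idx D n) X i ^+ 2.

Definition vnorm2 (R : realType) N (v : 'cV[R]_N) : R := \sum_(i < N) v i 0 ^+ 2.
Definition vdot (R : realType) N (v w : 'cV[R]_N) : R := \sum_(i < N) v i 0 * w i 0.

(* HOSVD (multilinear) rank at most (r,...,r): there are subspaces U_1..U_D
   of R^n (row spaces of n x n matrices) of dimension r with
   X in U_1 (x) ... (x) U_D, i.e. X is a finite sum of outer products
   u^1 o ... o u^D with u^j in U_j. *)
Definition hosvd_rank_le (R : realType) D n (r : nat) (X : tensor R D n) : Prop :=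
  exists U : 'I_D -> 'M[R]_n,
    (forall j, \rank (U j) = r) /\
    exists (N : nat) (u : 'I_N -> 'I_D -> 'rV[R]_n),
      (forall k j, (u k j <= U j)%MS) /\
      forall i : idx D n, X i = \sum_(k < N) \prod_(j < D) u k j 0 (i j).

(* b-th (0-based, most significant first) base-n digit of an index of
   R^{n^kappa}: Kronecker ordering, (j_0,...,j_{kappa-1}) |-> sum_b j_b n^(kappa-1-b) *)
Definition kdigit (n kappa : nat) (J : nat) (b : nat) : nat :=
  ((J %/ n ^ (kappa.-1 - b)) %% n)%N.

(* entry of a row vector at a nat index (0 outside range) *)
Definition rent (R : realType) n (u : 'rV[R]_n) (k : nat) : R :=
  if insub k is Some i then u 0 i else 0.

Definition kron (R : realType) n kappa (u : 'I_kappa -> 'rV[R]_n) : 'cV[R]_(n ^ kappa) :=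
  \col_(J < n ^ kappa) \prod_(b < kappa) rent (u b) (kdigit n kappa J b).

Definition S1 (R : realType) n kappa : 'cV[R]_(n ^ kappa) -> Prop :=
  fun x => exists u : 'I_kappa -> 'rV[R]_n,
    (forall b, \sum_(i < n) u b 0 i ^+ 2 = 1) /\ x = kron u.

Definition S2 (R : realType) n kappa : 'cV[R]_(n ^ kappa) -> Prop :=
  fun s => exists x y, S1 x /\ S1 y /\ vdot x y = 0 /\
    s = (Num.sqrt (vnorm2 (x + y)))^-1 *: (x + y).

Definition S12 (R : realType) n kappa : 'cV[R]_(n ^ kappa) -> Prop :=
  fun s => S1 s \/ S2 s.

Definition RIP (R : realType) m N (A : 'M[R]_(m, N)) (eps : R) (S : 'cV[R]_N -> Prop) : Prop :=
  forall s, S s -> (1 - eps) * vnorm2 s <= vnorm2 (A *m s) /\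
                   vnorm2 (A *m s) <= (1 + eps) * vnorm2 s.

(* The reshaping operator R : R^{n x...x n} (d modes) -> R^{n^k x...x n^k}
   (d/k modes): mode j of X (0-based) goes to mode j / k of the result, as
   Kronecker digit j mod k. *)
Definition treshape (R : realType) (d n kappa : nat) (X : tensor R d n)
  : tensor R (d %/ kappa) (n ^ kappa) :=
  fun J => \sum_(i : idx d n)
    (if [forall a : 'I_(d %/ kappa), forall j : 'I_d,
           (val j %/ kappa == val a)%N ==>
           (val (i j) == kdigit n kappa (J a) (val j %% kappa))%N]
     then X i else 0).

Definition multi_mode (R : realType) (D N m : nat) (A : 'I_D -> 'M[R]_(m, N))
  (Y : tensor R D N) : tensor R D m :=
  fun l => \sum_(J : idx D N) Y J * \prod_(a < D) A a (l a) (J a).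

From HB Require Import structures.
From mathcomp Require Import all_boot all_order all_algebra.
From mathcomp Require Import reals.
From mathcomp Require Import zify ring lra.
Import Order.TTheory GRing.Theory Num.Theory.
Local Open Scope ring_scope.

Set Implicit Arguments. Unset Strict Implicit. Unset Printing Implicit Defensive.

(* Orthonormalizing the mode subspaces writes X = sum_P C_P q^1_(P_1) o ... o q^d_(P_d),
   the sum running over the r^d multi-indices P, with ||X||^2 = sum_P C_P^2. Reshaping
   regroups the d factors into d' Kronecker products x_(P,a) in S_1 of kappa basis
   vectors, and x_(P,a), x_(P',a) are either equal or orthogonal. In the second case
   (x + y)/||x + y|| lies in S_2, so polarization and the RIP on S_(1,2) give
   |<A_a x, A_a y> - <x, y>| <= 2 eps in both cases. Both ||X||^2 and ||A(R(X))||^2 expand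
   as sum_(P,P') C_P C_P' prod_a <.,.> with inner products bounded by 1, hence differ by
   at most ((1 + 2 eps)^d' - 1) sum_(P,P') |C_P| |C_P'| <= 4 d' eps r^d ||X||^2. *)

Lemma big_nat_mul_shift (T : Type) (idx : T) (op : Monoid.law idx) k n (F : nat -> T) :
  \big[op/idx]_(0 <= j < k * n) F j =
  \big[op/idx]_(0 <= a < k) \big[op/idx]_(0 <= t < n) F (t + a * n)%N.
Proof.
rewrite big_nat_mul; apply: eq_bigr => a _.
by rewrite -{1}(add0n (a * n)%N) big_addn mulSn addnK.
Qed.

Lemma kdigit_lt n kappa J b : (0 < n)%N -> (kdigit n kappa J b < n)%N.
Proof. exact: ltn_pmod. Qed.

Lemma sum_kdigit_prod (R : comPzSemiRingType) n kappa (f : 'I_kappa -> nat -> R) :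
  (0 < n)%N ->
  \sum_(J < n ^ kappa) \prod_(b < kappa) f b (kdigit n kappa J b) =
  \prod_(b < kappa) \sum_(t < n) f b t.
Proof.
move=> n_gt0; elim: kappa f => [|k IH] f.
  by rewrite expn0 big_ord1 !big_ord0.
rewrite [RHS]big_ord_recr /= -(IH (fun b => f (widen_ord (leqnSn k) b))) expnSr.
rewrite -(big_mkord xpredT (fun J => \prod_(b < k.+1) f b (kdigit n k.+1 J b))).
rewrite big_nat_mul_shift mulr_suml big_mkord; apply: eq_bigr => a _.
rewrite big_mkord mulr_sumr; apply: eq_bigr => t _.
rewrite big_ord_recr /=; congr (_ * _).
  apply: eq_bigr => b _; congr (f _ _); rewrite /kdigit /=.
  have -> : (k - b = (k.-1 - b).+1)%N by have := ltn_ord b; lia.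
  by rewrite expnS divnMA divnDMl // (divn_small (ltn_ord t)) add0n.
by rewrite /kdigit /= subnn expn0 divn1 addnC modnMDl modn_small.
Qed.

Lemma sum_ffun_prod_mul (R : comPzSemiRingType) (I J : finType) (F G : I -> J -> R) :
  \sum_(f : {ffun I -> J}) (\prod_i F i (f i)) * (\prod_i G i (f i)) =
  \prod_i \sum_j F i j * G i j.
Proof. by rewrite bigA_distr_bigA; apply: eq_bigr => f _; rewrite big_split. Qed.

Lemma sum_sqr_sum_prod (R : comPzSemiRingType) (T : finType) D N (C : T -> R)
    (f : T -> 'I_D -> 'I_N -> R) :
  \sum_(l : idx D N) (\sum_P C P * \prod_a f P a (l a)) ^+ 2 =
  \sum_P \sum_P' C P * C P' * \prod_a \sum_t f P a t * f P' a t.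
Proof.
under eq_bigr do rewrite expr2 mulr_suml.
under eq_bigr do under eq_bigr do rewrite mulr_sumr.
rewrite exchange_big; apply: eq_bigr => P _.
rewrite exchange_big; apply: eq_bigr => P' _.
under eq_bigr do rewrite mulrACA.
by rewrite -mulr_sumr (sum_ffun_prod_mul (f P) (f P')).
Qed.

Lemma prod_eqb_ffun (R : comPzSemiRingType) (T : finType) (U : eqType) (f g : {ffun T -> U}) :
  \prod_j (f j == g j)%:R = (f == g)%:R :> R.
Proof.
have [<-|neq_fg] := eqVneq f g; first by rewrite big1 // => j _; rewrite eqxx.
have [j neq_j | eq_fg] := pickP (fun j => f j != g j).
  by rewrite (bigD1 j) //= (negbTE neq_j) mul0r.
by case/eqP: neq_fg; apply/ffunP => j; apply/eqP/negbFE/eq_fg.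
Qed.

Lemma row_free_col_mx1 (F : fieldType) n k (b : 'rV[F]_n) (B : 'M_(k, n)) :
  row_free (col_mx b B) -> row_free B /\ ~~ (b <= B)%MS.
Proof.
rewrite /row_free -addsmxE => /eqP rk_bB.
have rk_B : \rank B = k.
  have := (mxrank_adds_leqif b B).1; have := rank_leq_row b.
  have := rank_leq_row B; rewrite rk_bB; lia.
split; first exact/eqP.
by apply/negP => /addsmx_idPr bB; move: rk_bB; rewrite bB rk_B => /n_Sn.
Qed.

Section GramSchmidt.
Variable R : rcfType.

Lemma orthonormal_row_free k n (Q : 'M[R]_(k, n)) : Q *m Q^T = 1%:M -> row_free Q.
Proof.
move=> orthoQ; rewrite /row_free eqn_leq rank_leq_row /=.
by rewrite -{1}(mxrank1 R k) -orthoQ mxrankM_maxl.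
Qed.

Lemma orthonormal_col_mx k1 k2 n (Q1 : 'M[R]_(k1, n)) (Q2 : 'M_(k2, n)) :
  Q1 *m Q1^T = 1%:M -> Q2 *m Q2^T = 1%:M -> Q1 *m Q2^T = 0 ->
  col_mx Q1 Q2 *m (col_mx Q1 Q2)^T = 1%:M.
Proof.
move=> orthoQ1 orthoQ2 Q12; rewrite tr_col_mx mul_col_row orthoQ1 orthoQ2 Q12.
have -> : Q2 *m Q1^T = 0 by rewrite -[Q2]trmxK -trmx_mul Q12 trmx0.
by rewrite -scalar_mx_block.
Qed.

Lemma normalize_row n (w : 'rV[R]_n) : w != 0 ->
  exists2 c : R, c != 0 & (c^-1 *: w) *m (c^-1 *: w)^T = 1%:M.
Proof.
move=> w_neq0; set s := \sum_i w 0 i ^+ 2.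
have wwT : w *m w^T = s%:M.
  apply/matrixP => i j; rewrite !ord1 !mxE eqxx mulr1n.
  by apply: eq_bigr => t _; rewrite mxE expr2.
have s_gt0 : 0 < s.
  rewrite lt_def sumr_ge0 ?andbT => [|t _]; last exact: sqr_ge0.
  apply: contra w_neq0 => /eqP/psumr_eq0P s0; apply/eqP/rowP => t.
  by rewrite mxE; apply/eqP; rewrite -sqrf_eq0 s0 // => i _; apply: sqr_ge0.
exists (Num.sqrt s); first by rewrite gt_eqF ?sqrtr_gt0.
rewrite linearZ /= -scalemxAl -scalemxAr wwT !scale_scalar_mx mulrA -expr2.
by rewrite exprVn sqr_sqrtr ?ltW // mulVf ?gt_eqF.
Qed.

Lemma orthonormal_extend k n (Q : 'M[R]_(k, n)) (b : 'rV_n) :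
  Q *m Q^T = 1%:M -> ~~ (b <= Q)%MS ->
  exists Q' : 'M[R]_(1 + k, n), Q' *m Q'^T = 1%:M /\ (col_mx b Q <= Q')%MS.
Proof.
move=> orthoQ bQ; set w := b - b *m Q^T *m Q.
have wQ : w *m Q^T = 0 by rewrite mulmxBl -!mulmxA orthoQ mulmx1 subrr.
have w_neq0 : w != 0.
  apply: contra bQ => /eqP/subr0_eq ->; exact: submxMl.
have [c c_neq0 orthoq] := normalize_row w_neq0.
exists (col_mx (c^-1 *: w) Q); split.
  by apply: orthonormal_col_mx => //; rewrite -scalemxAl wQ scaler0.
rewrite -!addsmxE addsmx_sub addsmxSr andbT.
have -> : b = c *: (c^-1 *: w) + b *m Q^T *m Q.
  by rewrite scalerA divff // scale1r subrK.
apply: addmx_sub; first exact/scalemx_sub/addsmxSl.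
exact: submx_trans (submxMl _ _) (addsmxSr _ _).
Qed.

Lemma row_free_orthonormal_cover k n (B : 'M[R]_(k, n)) : row_free B ->
  exists Q : 'M[R]_(k, n), Q *m Q^T = 1%:M /\ (B <= Q)%MS.
Proof.
elim: k B => [|k IH] B freeB.
  by exists B; split; [apply/matrixP => [[]]|].
pose b := usubmx (B : 'M_(1 + k, n)); pose B' := dsubmx (B : 'M_(1 + k, n)).
have -> : B = col_mx b B' by rewrite vsubmxK.
have [freeB' bB'] : row_free B' /\ ~~ (b <= B')%MS.
  by apply: row_free_col_mx1; rewrite vsubmxK.
have [Q [orthoQ B'Q]] := IH _ freeB'.
have QB' : (Q <= B')%MS.
  by rewrite -(mxrank_leqif_sup B'Q).2 (eqP freeB') (eqP (orthonormal_row_free orthoQ)).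
have [Q' [orthoQ' bQ_Q']] := orthonormal_extend orthoQ (contra (fun bQ => submx_trans bQ QB') bB').
have bB'_bQ : (col_mx b B' <= col_mx b Q)%MS.
  by rewrite col_mx_sub -addsmxE addsmxSl -addsmxE (submx_trans B'Q (addsmxSr _ _)).
by exists Q'; split => //; apply: submx_trans bB'_bQ bQ_Q'.
Qed.

Lemma rank_orthonormal_cover r n (U : 'M[R]_n) : \rank U = r ->
  exists Q : 'M[R]_(r, n), Q *m Q^T = 1%:M /\ (U <= Q)%MS.
Proof.
move=> <-; have [Q [orthoQ baseQ]] := row_free_orthonormal_cover (row_base_free U).
by exists Q; split => //; rewrite -(eq_row_base U).
Qed.

End GramSchmidt.

Lemma hosvd_expand (R : realType) d n r (X : tensor R d n) : hosvd_rank_le r X ->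
  exists (Q : 'I_d -> 'M[R]_(r, n)) (C : idx d r -> R),
    (forall j, Q j *m (Q j)^T = 1%:M) /\
    forall i, X i = \sum_P C P * \prod_j Q j (P j) (i j).
Proof.
move=> [U [rkU [N [u [uU X_u]]]]].
have [Q QU] := fin_all_exists (fun j => rank_orthonormal_cover (rkU j)).
have coord k j : exists c : 'rV[R]_r, u k j = c *m Q j.
  by have /submxP [c ->] := submx_trans (uU k j) (QU j).2; exists c.
have [c u_c] := fin_all_exists (fun k => fin_all_exists (coord k)).
exists Q, (fun P => \sum_(k < N) \prod_j c k j 0 (P j)); split => [j|i].
  exact: (QU j).1.
rewrite X_u; under eq_bigr => k _ do under eq_bigr => j _ do rewrite u_c mxE.
under eq_bigr => k _ do rewrite bigA_distr_bigA.
rewrite exchange_big; apply: eq_bigr => P _; rewrite mulr_suml.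
by apply: eq_bigr => k _; rewrite big_split.
Qed.

Section VectorNorms.
Variable R : realType.

Lemma vnorm2_dot N (v : 'cV[R]_N) : vnorm2 v = vdot v v.
Proof. by apply: eq_bigr => i _; rewrite expr2. Qed.

Lemma vnorm2D N (v w : 'cV[R]_N) : vnorm2 (v + w) = vnorm2 v + vnorm2 w + 2 * vdot v w.
Proof.
rewrite /vnorm2 /vdot mulr_sumr -!big_split /=; apply: eq_bigr => i _.
by rewrite mxE; ring.
Qed.

Lemma vnorm2Z N c (v : 'cV[R]_N) : vnorm2 (c *: v) = c ^+ 2 * vnorm2 v.
Proof. by rewrite /vnorm2 mulr_sumr; apply: eq_bigr => i _; rewrite mxE exprMn. Qed.

Variables (n : nat) (n_gt0 : (0 < n)%N).

Lemma rent_ord (v : 'rV[R]_n) (i : 'I_n) : rent v i = v 0 i.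
Proof. by rewrite /rent valK. Qed.

Lemma vdot_kron kappa (v w : 'I_kappa -> 'rV[R]_n) :
  vdot (kron v) (kron w) = \prod_b \sum_(t < n) v b 0 t * w b 0 t.
Proof.
rewrite /vdot (eq_bigr (fun J : 'I_(n ^ kappa) =>
  \prod_b (rent (v b) (kdigit n kappa J b) * rent (w b) (kdigit n kappa J b)))); last first.
  by move=> J _; rewrite !mxE big_split.
rewrite (sum_kdigit_prod (fun b t => rent (v b) t * rent (w b) t)) //.
by apply: eq_bigr => b _; apply: eq_bigr => t _; rewrite !rent_ord.
Qed.

Lemma S1_vnorm2 kappa (x : 'cV[R]_(n ^ kappa)) : S1 x -> vnorm2 x = 1.
Proof.
case=> u [unit_u ->]; rewrite vnorm2_dot vdot_kron big1 // => b _.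
by rewrite -(unit_u b); apply: eq_bigr => t _; rewrite expr2.
Qed.

Lemma RIP_eps_ge0 m N (A : 'M[R]_(m, N)) eps (S : 'cV[R]_N -> Prop) s :
  RIP A eps S -> S s -> 0 < vnorm2 s -> 0 <= eps.
Proof. by move=> RIP_A /RIP_A [lo hi] s_gt0; nra. Qed.

Lemma RIP_vdot_dev m kappa (A : 'M[R]_(m, n ^ kappa)) eps (x y : 'cV[R]_(n ^ kappa)) :
  RIP A eps (@S12 R n kappa) -> S1 x -> S1 y -> vdot x y = 0 \/ x = y ->
  `|vdot (A *m x) (A *m y) - vdot x y| <= 2 * eps.
Proof.
move=> RIP_A S1x S1y; have x1 := S1_vnorm2 S1x; have y1 := S1_vnorm2 S1y.
have [lo_x hi_x] := RIP_A x (or_introl S1x); rewrite x1 mulr1 in lo_x hi_x.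
case=> [xy0 | <-].
  have [lo_y hi_y] := RIP_A y (or_introl S1y); rewrite y1 mulr1 in lo_y hi_y.
  have xy2 : vnorm2 (x + y) = 2 by rewrite vnorm2D x1 y1 xy0; ring.
  have S2xy : S12 ((Num.sqrt (vnorm2 (x + y)))^-1 *: (x + y)) by right; exists x, y.
  have [lo hi] := RIP_A _ S2xy.
  rewrite -scalemxAr !vnorm2Z exprVn sqr_sqrtr xy2 // mulmxDr vnorm2D in lo hi.
  by rewrite xy0 subr0 ler_norml; apply/andP; split; nra.
by rewrite -!vnorm2_dot x1 ler_norml; apply/andP; split; lra.
Qed.

End VectorNorms.

Section ProductPerturbation.
Variable R : realFieldType.

Lemma normr_prodB_le (I : Type) (s : seq I) (g e : I -> R) delta :
  (forall i, `|e i| <= 1) -> (forall i, `|g i - e i| <= delta) ->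
  `|\prod_(i <- s) g i - \prod_(i <- s) e i| <= (1 + delta) ^+ size s - 1.
Proof.
move=> e_le1 ge_le; elim: s => [|a s IH].
  by rewrite !big_nil expr0 !subrr normr0.
have E_le1 : `|\prod_(i <- s) e i| <= 1.
  by rewrite normr_prod; apply: prodr_ile1 => i _; rewrite normr_ge0 e_le1.
have ga_le : `|g a| <= 1 + delta.
  rewrite -[g a](subrK (e a)) addrC; apply: le_trans (ler_normD _ _) _.
  exact: lerD.
rewrite !big_cons /= exprS.
set G := \prod_(i <- s) g i in IH *; set E := \prod_(i <- s) e i in IH E_le1 *.
have -> : g a * G - e a * E = g a * (G - E) + (g a - e a) * E by ring.
apply: le_trans (ler_normD _ _) _; rewrite !normrM.
apply: le_trans (lerD (ler_pM _ _ ga_le IH) (ler_pM _ _ (ge_le a) E_le1)) _ => //.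
by rewrite mulr1 mulrBr mulr1 opprD addrA subrK.
Qed.

Lemma expr1D_le_lin (x : R) k : 0 <= x -> k%:R * x <= 2^-1 ->
  (1 + x) ^+ k <= 1 + 2 * k%:R * x.
Proof.
move=> x_ge0; elim: k => [|k IH] kx; first by rewrite expr0 mulr0 mul0r addr0.
have kx' : k%:R * x <= 2^-1.
  by apply: le_trans kx; rewrite ler_wpM2r // ler_nat.
have := IH kx'; rewrite exprS -natr1 in kx *.
have := exprn_ge0 k (addr_ge0 ler01 x_ge0); move: ((1 + x) ^+ k) => P.
have : 0 <= k%:R :> R by [].
by move: (k%:R : R) kx kx' => K *; nra.
Qed.

Lemma sum_normr_mul_le (T : finType) (C : T -> R) :
  \sum_P \sum_P' `|C P| * `|C P'| <= #|T|%:R * \sum_P C P ^+ 2.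
Proof.
have amgm (a b : R) : `|a| * `|b| <= (a ^+ 2 + b ^+ 2) / 2.
  rewrite -(real_normK (num_real a)) -(real_normK (num_real b)).
  by have := sqr_ge0 (`|a| - `|b|); rewrite sqrrB; lra.
apply: le_trans (_ : \sum_P \sum_P' (C P ^+ 2 + C P' ^+ 2) / 2 <= _).
  by apply: ler_sum => P _; apply: ler_sum => P' _; apply: amgm.
under eq_bigr do rewrite -mulr_suml big_split /= sumr_const.
rewrite -mulr_suml big_split /= sumr_const sumrMnl mulr_natl.
by set y := _ *+ _; lra.
Qed.

Lemma sum_prod_perturb (T I : finType) (C : T -> R) (G E : T -> T -> I -> R) delta :
  0 <= delta -> (forall P P' i, `|E P P' i| <= 1) ->
  (forall P P' i, `|G P P' i - E P P' i| <= delta) ->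
  `|\sum_P \sum_P' C P * C P' * \prod_i G P P' i -
    \sum_P \sum_P' C P * C P' * \prod_i E P P' i|
    <= ((1 + delta) ^+ #|I| - 1) * (#|T|%:R * \sum_P C P ^+ 2).
Proof.
move=> delta_ge0 E_le1 GE_le; set K := (1 + delta) ^+ #|I| - 1.
have K_ge0 : 0 <= K by rewrite subr_ge0 exprn_ege1 // lerDl.
apply: le_trans (_ : \sum_P \sum_P' `|C P| * `|C P'| * K <= _); last first.
  under eq_bigr do rewrite -mulr_suml.
  by rewrite -mulr_suml mulrC; apply: ler_wpM2l => //; exact: sum_normr_mul_le.
rewrite -sumrB; apply: le_trans (ler_norm_sum _ _ _) _; apply: ler_sum => P _.
rewrite -sumrB; apply: le_trans (ler_norm_sum _ _ _) _; apply: ler_sum => P' _.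
rewrite -mulrBr !normrM; apply: ler_wpM2l; first exact: mulr_ge0.
rewrite /K cardE enumT; exact: normr_prodB_le.
Qed.

End ProductPerturbation.

Section Reshape.
Variables (d kappa : nat) (kappa_gt0 : (0 < kappa)%N) (kappa_dvd_d : (kappa %| d)%N).
Local Notation D := (d %/ kappa)%N.

Lemma block_mode_subproof (a : 'I_D) (b : 'I_kappa) : (b + a * kappa < d)%N.
Proof.
apply: leq_trans (_ : kappa + a * kappa <= d)%N; first by rewrite ltn_add2r.
by rewrite -mulSn -{2}(divnK kappa_dvd_d) leq_mul2r ltn_ord orbT.
Qed.

Definition block_mode (a : 'I_D) (b : 'I_kappa) : 'I_d := Ordinal (block_mode_subproof a b).

Lemma block_subproof (j : 'I_d) : (j %/ kappa < D)%N.
Proof. by rewrite ltn_divLR // divnK. Qed.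

Definition block (j : 'I_d) : 'I_D := Ordinal (block_subproof j).

Lemma block_mode_divK a b : block (block_mode a b) = a.
Proof. by apply: val_inj; rewrite /= divnDMl // divn_small. Qed.

Lemma block_mode_modK a b : (block_mode a b %% kappa)%N = b.
Proof. by rewrite /= addnC modnMDl modn_small. Qed.

Lemma big_block_mode (T : Type) (idx : T) (op : Monoid.com_law idx) (F : 'I_d -> T) :
  \big[op/idx]_(j < d) F j = \big[op/idx]_(a < D) \big[op/idx]_(b < kappa) F (block_mode a b).
Proof.
have bij_bm : bijective (fun p : 'I_D * 'I_kappa => block_mode p.1 p.2).
  apply: inj_card_bij; last by rewrite card_prod !card_ord divnK.
  move=> [a b] [a' b'] /= eq_ab; congr (_, _).
    by rewrite -(block_mode_divK a b) eq_ab block_mode_divK.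
  by apply: ord_inj; rewrite -(block_mode_modK a b) eq_ab block_mode_modK.
by rewrite (reindex _ (onW_bij _ bij_bm)) pair_bigA.
Qed.

Definition reshape_index n (n_gt0 : (0 < n)%N) (J : idx D (n ^ kappa)) : idx d n :=
  [ffun j => Ordinal (@kdigit_lt n kappa (J (block j)) (j %% kappa) n_gt0)].

Lemma reshape_index_block_mode n (n_gt0 : (0 < n)%N) J a b :
  val (reshape_index n_gt0 J (block_mode a b)) = kdigit n kappa (J a) b.
Proof. by rewrite ffunE /= block_mode_divK block_mode_modK. Qed.

Lemma treshapeE R n (n_gt0 : (0 < n)%N) (X : tensor R d n) J :
  treshape X J = X (reshape_index n_gt0 J).
Proof.
rewrite /treshape (bigD1 (reshape_index n_gt0 J)) //= ifT; last first.
  apply/forallP => a; apply/forallP => j; apply/implyP => /eqP ja.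
  by rewrite ffunE /=; have -> : block j = a by apply: val_inj.
rewrite big1 ?addr0 // => i ne_i; rewrite ifF //; apply: contraNF ne_i => /forallP H.
apply/eqP/ffunP => j; apply: val_inj; rewrite ffunE /=.
by move/forallP: (H (block j)) => /(_ j); rewrite eqxx => /eqP.
Qed.

End Reshape.

Section Expansion.
Variables (R : realType) (d n kappa r m : nat).
Hypotheses (n_gt0 : (0 < n)%N) (kappa_gt0 : (0 < kappa)%N) (kappa_dvd_d : (kappa %| d)%N).
Local Notation D := (d %/ kappa)%N.
Local Notation block_mode := (block_mode kappa_dvd_d).
Variables (Q : 'I_d -> 'M[R]_(r, n)) (C : idx d r -> R) (X : tensor R d n).
Hypothesis orthoQ : forall j, Q j *m (Q j)^T = 1%:M.
Hypothesis X_expand : forall i, X i = \sum_P C P * \prod_j Q j (P j) (i j).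

Definition factor (P : idx d r) (a : 'I_D) : 'cV[R]_(n ^ kappa) :=
  kron (fun b => row (P (block_mode a b)) (Q (block_mode a b))).

Lemma dot_rowsQ j p p' : \sum_(t < n) Q j p t * Q j p' t = (p == p')%:R.
Proof.
have := congr1 (fun M : 'M[R]_r => M p p') (orthoQ j).
by rewrite !mxE => <-; apply: eq_bigr => t _; rewrite mxE.
Qed.

Lemma vdot_factor P P' a :
  vdot (factor P a) (factor P' a) = \prod_b (P (block_mode a b) == P' (block_mode a b))%:R.
Proof.
rewrite vdot_kron //; apply: eq_bigr => b _; rewrite -(dot_rowsQ (block_mode a b)).
by apply: eq_bigr => t _; rewrite !mxE.
Qed.

Lemma S1_factor P a : S1 (factor P a).
Proof.
exists (fun b => row (P (block_mode a b)) (Q (block_mode a b))); split => // b.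
have -> : 1 = (P (block_mode a b) == P (block_mode a b))%:R :> R by rewrite eqxx.
rewrite -(dot_rowsQ (block_mode a b)).
by apply: eq_bigr => t _; rewrite mxE expr2.
Qed.

Lemma factor_orth_or_eq P P' a :
  vdot (factor P a) (factor P' a) = 0 \/ factor P a = factor P' a.
Proof.
have [b neq_b | eq_P] := pickP (fun b => P (block_mode a b) != P' (block_mode a b)).
  by left; rewrite vdot_factor (bigD1 b) //= (negbTE neq_b) mul0r.
right; apply/matrixP => J k; rewrite !mxE; apply: eq_bigr => b _.
by move/negbFE/eqP: (eq_P b) => ->.
Qed.

Lemma treshape_expand J : treshape X J = \sum_P C P * \prod_a factor P a (J a) 0.
Proof.
rewrite (treshapeE kappa_gt0 kappa_dvd_d n_gt0) X_expand; apply: eq_bigr => P _.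
rewrite (big_block_mode kappa_gt0 kappa_dvd_d); congr (_ * _); apply: eq_bigr => a _.
rewrite mxE; apply: eq_bigr => b _.
by rewrite -(reshape_index_block_mode kappa_gt0 kappa_dvd_d n_gt0) rent_ord mxE.
Qed.

Lemma multi_mode_expand (A : 'I_D -> 'M[R]_(m, n ^ kappa)) l :
  multi_mode A (treshape X) l = \sum_P C P * \prod_a (A a *m factor P a) (l a) 0.
Proof.
rewrite /multi_mode; under eq_bigr do rewrite treshape_expand mulr_suml.
rewrite exchange_big; apply: eq_bigr => P _.
under eq_bigr do rewrite -mulrA.
rewrite -mulr_sumr (sum_ffun_prod_mul (fun a t => factor P a t 0) (fun a t => A a (l a) t)).
by congr (_ * _); apply: eq_bigr => a _; rewrite mxE; apply: eq_bigr => t _; rewrite mulrC.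
Qed.

Lemma tnorm2_delta : tnorm2 X = \sum_P \sum_P' C P * C P' * \prod_j (P j == P' j)%:R.
Proof.
rewrite /tnorm2; under eq_bigr do rewrite X_expand.
rewrite (sum_sqr_sum_prod C (fun P j t => Q j (P j) t)).
by apply: eq_bigr => P _; apply: eq_bigr => P' _; under eq_bigr do rewrite dot_rowsQ.
Qed.

Lemma tnorm2_coef : tnorm2 X = \sum_P C P ^+ 2.
Proof.
rewrite tnorm2_delta; apply: eq_bigr => P _.
rewrite (bigD1 P) //= prod_eqb_ffun eqxx mulr1 big1 ?addr0 ?expr2 // => P' neq_P'.
by rewrite prod_eqb_ffun eq_sym (negbTE neq_P') mulr0.
Qed.

Lemma tnorm2_factor :
  tnorm2 X = \sum_P \sum_P' C P * C P' * \prod_a vdot (factor P a) (factor P' a).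
Proof.
rewrite tnorm2_delta; apply: eq_bigr => P _; apply: eq_bigr => P' _.
rewrite (big_block_mode kappa_gt0 kappa_dvd_d); congr (_ * _).
by apply: eq_bigr => a _; rewrite vdot_factor.
Qed.

Lemma tnorm2_multi_mode (A : 'I_D -> 'M[R]_(m, n ^ kappa)) :
  tnorm2 (multi_mode A (treshape X)) =
  \sum_P \sum_P' C P * C P' * \prod_a vdot (A a *m factor P a) (A a *m factor P' a).
Proof.
rewrite /tnorm2; under eq_bigr do rewrite multi_mode_expand.
exact: (sum_sqr_sum_prod C (fun P a t => (A a *m factor P a) t 0)).
Qed.

Lemma multi_mode_reshape_dev (A : 'I_D -> 'M[R]_(m, n ^ kappa)) eps :
  (forall a, RIP (A a) eps (@S12 R n kappa)) -> 0 <= eps ->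
  `|tnorm2 (multi_mode A (treshape X)) - tnorm2 X| <=
    ((1 + 2 * eps) ^+ D - 1) * (r%:R ^+ d * tnorm2 X).
Proof.
move=> RIP_A eps_ge0; rewrite tnorm2_multi_mode {1}tnorm2_factor.
have -> : r%:R ^+ d = #|idx d r|%:R :> R by rewrite card_ffun !card_ord natrX.
rewrite tnorm2_coef -[in (1 + 2 * eps) ^+ D](card_ord D).
apply: sum_prod_perturb => [|P P' a|P P' a]; first by rewrite mulr_ge0.
  have [->|->] := factor_orth_or_eq P P' a; first by rewrite normr0 ler01.
  by rewrite -vnorm2_dot (S1_vnorm2 n_gt0 (S1_factor P' a)) normr1.
apply: RIP_vdot_dev => //; [exact: S1_factor|exact: S1_factor|exact: factor_orth_or_eq].
Qed.

End Expansion.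

Unset Implicit Arguments.
Theorem theorem1 (R : realType) (d n kappa r m : nat)
  (hd : (1 <= d)%N) (hn : (1 <= n)%N) (hk : (1 <= kappa)%N)
  (hkd : (kappa %| d)%N) (hr : (2 <= r)%N)
  (A : 'I_(d %/ kappa) -> 'M[R]_(m, n ^ kappa)) (eps : R)
  (hRIP : forall a, RIP (A a) eps (@S12 R n kappa))
  (hdelta : 4 * (d %/ kappa)%:R * r%:R ^+ d * eps < 1) :
  forall X : tensor R d n, hosvd_rank_le r X ->
    (1 - 4 * (d %/ kappa)%:R * r%:R ^+ d * eps) * tnorm2 X
      <= tnorm2 (multi_mode A (@treshape R d n kappa X)) /\
    tnorm2 (multi_mode A (@treshape R d n kappa X))
      <= (1 + 4 * (d %/ kappa)%:R * r%:R ^+ d * eps) * tnorm2 X.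
Proof.
move=> X /hosvd_expand [Q [C [orthoQ X_expand]]].
have D_gt0 : (0 < d %/ kappa)%N by rewrite divn_gt0 // dvdn_leq.
have r_gt0 : (0 < r)%N by apply: leq_trans hr.
have eps_ge0 : 0 <= eps.
  pose P0 : idx d r := [ffun => Ordinal r_gt0]; pose a0 := Ordinal D_gt0.
  have S1_x0 := S1_factor hkd orthoQ P0 a0.
  by apply: (RIP_eps_ge0 (hRIP a0) (or_introl S1_x0)); rewrite (S1_vnorm2 hn S1_x0).
have rd_ge1 : 1 <= r%:R ^+ d :> R by rewrite exprn_ege1 // ler1n ltnW.
have K_le : (1 + 2 * eps) ^+ (d %/ kappa) - 1 <= 4 * (d %/ kappa)%:R * eps.
  have two_eps_ge0 : 0 <= 2 * eps by rewrite mulr_ge0.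
  have : (d %/ kappa)%:R * (2 * eps) <= 2^-1 :> R by nra.
  by move/(expr1D_le_lin two_eps_ge0); lra.
have X_ge0 : 0 <= tnorm2 X by apply: sumr_ge0 => i _; apply: sqr_ge0.
have := multi_mode_reshape_dev hn hk hkd orthoQ X_expand hRIP eps_ge0.
move/le_trans/(_ (ler_wpM2r (mulr_ge0 (le_trans ler01 rd_ge1) X_ge0) K_le)).
rewrite ler_norml => /andP[lo hi]; split; lra.
Qed.
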